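(* The two-dimensional subalgebras of ${\rm S}_1$ are exactly $\langle e_1,e_2\rangle$, $\langle e_2,e_3\rangle$ and $\langle e_1,\alpha e_2+e_3\rangle$ ($\alpha\in\mathbb{C}$). Up to automorphisms of ${\rm S}_1$, every two-dimensional subalgebra is equivalent to $\langle e_1,e_2\rangle$ or $\langle e_2,e_3\rangle$.
   Context: ${\rm S}_1$ is the complex algebra with basis $e_1,e_2,e_3$ whose only nonzero products of basis elements are $e_1e_i=e_ie_1=e_i$ ($i=1,2,3$). A subalgebra is a linear subspace closed under multiplication (it need not contain $e_1$). Equivalence up to automorphisms means one is mapped onto the other by an algebra automorphism. $\langle S\rangle$ denotes linear span. *)

From mathcomp Require Import all_boot all_algebra all_field.
From mathcomp Require Import complex.
From mathcomp Require Import Rstruct.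
Set Implicit Arguments. Unset Strict Implicit. Unset Printing Implicit Defensive.
Import GRing.Theory.
Local Open Scope ring_scope.

Definition C : fieldType := Rdefinitions.R[i].

(* Underlying vector space of S_1: row vectors of length 3 over C;
   coordinate i : 'I_3 is the coefficient of e_(i+1). *)
Definition S1 := 'rV[C]_3.

Definition e (i : 'I_3) : S1 := delta_mx 0 i.
Definition e1 : S1 := e 0.
Definition e2 : S1 := e 1.
Definition e3 : S1 := e 2.

Definition basis_prod (i j : 'I_3) : S1 :=
  if i == 0 then e j else if j == 0 then e i else 0.

Definition S1mul (x y : S1) : S1 :=
  \sum_(i < 3) \sum_(j < 3) (x 0 i * y 0 j) *: basis_prod i j.

Definition is_subalgebra (V : {vspace S1}) : Prop :=
  forall u v, u \in V -> v \in V -> S1mul u v \in V.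

Definition is_automorphism (f : S1 -> S1) : Prop :=
  [/\ (forall (a : C) (x y : S1), f (a *: x + y) = a *: f x + f y),
      bijective f &
      forall x y, f (S1mul x y) = S1mul (f x) (f y)].

Definition maps_onto (f : S1 -> S1) (V W : {vspace S1}) : Prop :=
  forall w, w \in W <-> exists2 v, v \in V & f v = w.

Definition aut_equiv (V W : {vspace S1}) : Prop :=
  exists f, is_automorphism f /\ maps_onto f V W.

From mathcomp Require Import all_boot all_algebra all_field.
From mathcomp Require Import complex Rstruct ring.
Set Implicit Arguments. Unset Strict Implicit. Unset Printing Implicit Defensive.
Import GRing.Theory.
Local Open Scope ring_scope.

(** The unit of S1 is e1, and N = <e2, e3> is an ideal with N N = 0, so that
   x y = x_1 y + y_1 x - x_1 y_1 e1, where x_1 is the e1-coordinate of x.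
   Hence every subspace containing e1 and every subspace of N is a
   subalgebra; conversely, a subalgebra containing some x with x_1 <> 0
   contains 2 x_1 x - x x = x_1^2 e1.  A plane through e1 meets N in a line
   spanned by b e2 + c e3, which normalises to e2 (if c = 0) or to
   alpha e2 + e3.  Every linear bijection fixing e1 and the e1-coordinate is
   an automorphism, and (a, b, c) |-> (a, c, b - alpha c) maps alpha e2 + e3
   to e2. *)

Lemma row3P (x y : S1) :
  x 0 0 = y 0 0 -> x 0 1 = y 0 1 -> x 0 2 = y 0 2 -> x = y.
Proof.
move=> h0 h1 h2; apply/rowP => -[[|[|[|//]]] lt_j3];
  [have -> : Ordinal lt_j3 = 0 | have -> : Ordinal lt_j3 = 1
  | have -> : Ordinal lt_j3 = 2]; by [apply/val_inj |].
Qed.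

Lemma coord_e i j : e i 0 j = (i == j)%:R.
Proof. by rewrite mxE eqxx eq_sym. Qed.

Lemma coordD (x y : S1) i : (x + y) 0 i = x 0 i + y 0 i.
Proof. exact: mxE. Qed.

Lemma coordZ k (x : S1) i : (k *: x) 0 i = k * x 0 i.
Proof. exact: mxE. Qed.

Definition vec3 (a b c : C) : S1 := \row_(i < 3) [:: a; b; c]`_i.

Lemma vec3_coord0 a b c : vec3 a b c 0 0 = a. Proof. by rewrite mxE. Qed.
Lemma vec3_coord1 a b c : vec3 a b c 0 1 = b. Proof. by rewrite mxE. Qed.
Lemma vec3_coord2 a b c : vec3 a b c 0 2 = c. Proof. by rewrite mxE. Qed.

Definition vec3_coord := (vec3_coord0, vec3_coord1, vec3_coord2).

Lemma vec3_eta (x : S1) : vec3 (x 0 0) (x 0 1) (x 0 2) = x.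
Proof. by apply/row3P; rewrite !vec3_coord. Qed.

Lemma vec3D a b c a' b' c' :
  vec3 a b c + vec3 a' b' c' = vec3 (a + a') (b + b') (c + c').
Proof. by apply/row3P; rewrite !coordD !vec3_coord. Qed.

Lemma vec3Z k a b c : k *: vec3 a b c = vec3 (k * a) (k * b) (k * c).
Proof. by apply/row3P; rewrite !coordZ !vec3_coord. Qed.

Lemma vec3N a b c : - vec3 a b c = vec3 (- a) (- b) (- c).
Proof. by rewrite -scaleN1r vec3Z !mulN1r. Qed.

Lemma e1_vec3 : e1 = vec3 1 0 0.
Proof. by apply/row3P; rewrite !coord_e !vec3_coord. Qed.

Lemma e2_vec3 : e2 = vec3 0 1 0.
Proof. by apply/row3P; rewrite !coord_e !vec3_coord. Qed.

Lemma e3_vec3 : e3 = vec3 0 0 1.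
Proof. by apply/row3P; rewrite !coord_e !vec3_coord. Qed.

Lemma S1mul_vec3 a b c a' b' c' :
  S1mul (vec3 a b c) (vec3 a' b' c') = vec3 (a * a') (a * b' + b * a') (a * c' + c * a').
Proof.
rewrite /S1mul !big_ord_recl !big_ord0 /basis_prod /= -[e ord0]/e1.
have -> : e (lift ord0 ord0) = e2 by congr e; exact: val_inj.
have -> : e (lift ord0 (lift ord0 ord0)) = e3 by congr e; exact: val_inj.
rewrite ![vec3 a b c 0 _]mxE ![vec3 a' b' c' 0 _]mxE /=.
rewrite !scaler0 !addr0 e1_vec3 e2_vec3 e3_vec3 !vec3Z !vec3D.
by congr vec3; ring.
Qed.

Lemma S1mulE x y : S1mul x y = x 0 0 *: y + y 0 0 *: x - (x 0 0 * y 0 0) *: e1.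
Proof.
rewrite -[x]vec3_eta -[y]vec3_eta S1mul_vec3 !vec3_coord e1_vec3 !vec3Z vec3N !vec3D.
by congr vec3; ring.
Qed.

Lemma memv_span2P (K : fieldType) (vT : vectType K) (a b u : vT) :
  reflect (exists k1 k2, u = k1 *: a + k2 *: b) (u \in <<[:: a; b]>>%VS).
Proof.
rewrite span_cons span_seq1; apply: (iffP memv_addP).
- by case=> _ /vlineP[k1 ->] [_ /vlineP[k2 ->] ->]; exists k1, k2.
- case=> k1 [k2 ->]; exists (k1 *: a); first exact/rpredZ/memv_line.
  by exists (k2 *: b); first exact/rpredZ/memv_line.
Qed.

Lemma dim_span_pair (K : fieldType) (vT : vectType K) (a b : vT) :
  a \notin <[b]>%VS -> b != 0 -> \dim <<[:: a; b]>> = 2.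
Proof.
move=> a_b b_neq0; apply/eqP.
by rewrite -/(free [:: a; b]) free_cons span_seq1 a_b seq1_free.
Qed.

Lemma span_pair_eq (K : fieldType) (vT : vectType K) (V : {vspace vT}) (a b : vT) :
  a \in V -> b \in V -> \dim <<[:: a; b]>> = \dim V -> V = <<[:: a; b]>>%VS.
Proof.
move=> aV bV dimE; apply/eqP; rewrite eq_sym eqEdim dimE leqnn andbT.
by apply/span_subvP => x; rewrite !inE => /orP[]/eqP->.
Qed.

Lemma row_notin_vline (K : fieldType) n (x y : 'rV[K]_n) (i : 'I_n) :
  x 0 i != 0 -> y 0 i = 0 -> x \notin <[y]>%VS.
Proof.
move=> xi_neq0 yi0; apply/vlineP => -[k xE].
by move: xi_neq0; rewrite xE mxE yi0 mulr0 eqxx.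
Qed.

Lemma row_neq0 (K : fieldType) n (y : 'rV[K]_n) (i : 'I_n) : y 0 i != 0 -> y != 0.
Proof. by apply: contraNneq => ->; rewrite mxE. Qed.

Lemma e1_neq0 : e1 != 0.
Proof. by apply: (@row_neq0 _ _ _ 0); rewrite coord_e oner_eq0. Qed.

Lemma memv_e2e3 x : (x \in <<[:: e2; e3]>>%VS) = (x 0 0 == 0).
Proof.
apply/memv_span2P/eqP => [[k1 [k2 ->]] | x0].
  by rewrite coordD !coordZ !coord_e /= !mulr0 addr0.
exists (x 0 1), (x 0 2).
by rewrite -{1}[x]vec3_eta x0 e2_vec3 e3_vec3 !vec3Z vec3D; congr vec3; ring.
Qed.

Lemma dim_span_e1e2 : \dim <<[:: e1; e2]>> = 2.
Proof.
apply: dim_span_pair; first apply: (@row_notin_vline _ _ _ _ 0).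
- by rewrite coord_e oner_eq0.
- by rewrite coord_e.
- by apply: (@row_neq0 _ _ _ 1); rewrite coord_e oner_eq0.
Qed.

Lemma dim_span_e2e3 : \dim <<[:: e2; e3]>> = 2.
Proof.
apply: dim_span_pair; first apply: (@row_notin_vline _ _ _ _ 1).
- by rewrite coord_e oner_eq0.
- by rewrite coord_e.
- by apply: (@row_neq0 _ _ _ 2); rewrite coord_e oner_eq0.
Qed.

Lemma dim_span_e1_alpha alpha : \dim <<[:: e1; (alpha *: e2 + e3)%R]>> = 2.
Proof.
apply: dim_span_pair; first apply: (@row_notin_vline _ _ _ _ 0).
- by rewrite coord_e oner_eq0.
- by rewrite coordD coordZ !coord_e /= mulr0 addr0.
- by apply: (@row_neq0 _ _ _ 2); rewrite coordD coordZ !coord_e /= mulr0 add0r oner_eq0.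
Qed.

Lemma is_subalgebraP (V : {vspace S1}) :
  is_subalgebra V <-> e1 \in V \/ (V <= <<[:: e2; e3]>>)%VS.
Proof.
split=> [subV | [e1V | VsubN] u v uV vV].
- have [e1V | e1_notin] := boolP (e1 \in V); [by left | right].
  apply/subvP => x xV; rewrite memv_e2e3; apply: contraNT e1_notin => x0_neq0.
  have sqrE : (x 0 0 * x 0 0) *: e1 = x 0 0 *: x + x 0 0 *: x - S1mul x x.
    by rewrite S1mulE opprB addrC subrK.
  have : (x 0 0 * x 0 0) *: e1 \in V by rewrite sqrE rpredB ?rpredD ?rpredZ ?subV.
  move/(rpredZ (x 0 0 * x 0 0)^-1).
  by rewrite scalerA mulVf ?mulf_neq0 // scale1r.
- by rewrite S1mulE rpredB ?rpredD ?rpredZ.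
- have /eqP u0 : u 0 0 == 0 by rewrite -memv_e2e3 (subvP VsubN).
  have /eqP v0 : v 0 0 == 0 by rewrite -memv_e2e3 (subvP VsubN).
  by rewrite S1mulE u0 v0 mul0r !scale0r !addr0 subr0 rpred0.
Qed.

Lemma dim2_sub_e2e3 (V : {vspace S1}) :
  \dim V = 2 -> (V <= <<[:: e2; e3]>>)%VS -> V = <<[:: e2; e3]>>%VS.
Proof. by move=> dimV VsubN; apply/eqP; rewrite eqEdim VsubN dim_span_e2e3 dimV. Qed.

Lemma dim2_e1_spans (V : {vspace S1}) : \dim V = 2 -> e1 \in V ->
  V = <<[:: e1; e2]>>%VS \/ exists alpha, V = <<[:: e1; (alpha *: e2 + e3)%R]>>%VS.
Proof.
move=> dimV e1V.
have [w wV w_e1] : exists2 w, w \in V & w \notin <[e1]>%VS.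
  by apply/subvPn/negP => /dimvS; rewrite dimV dim_vline e1_neq0.
have nV : w 0 1 *: e2 + w 0 2 *: e3 \in V.
  rewrite (_ : _ + _ = w - w 0 0 *: e1); first by rewrite rpredB ?rpredZ.
  rewrite -{3}[w]vec3_eta e1_vec3 e2_vec3 e3_vec3 !vec3Z vec3N !vec3D.
  by congr vec3; ring.
have [w2_0 | w2_neq0] := eqVneq (w 0 2) 0.
- left; have w1_neq0 : w 0 1 != 0.
    apply: contraNneq w_e1 => w1_0; apply/vlineP; exists (w 0 0).
    rewrite -{1}[w]vec3_eta w1_0 w2_0 e1_vec3 vec3Z.
    by congr vec3; ring.
  apply: (span_pair_eq e1V); last by rewrite dim_span_e1e2 dimV.
  rewrite (_ : e2 = (w 0 1)^-1 *: (w 0 1 *: e2 + w 0 2 *: e3)); first exact: rpredZ.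
  by rewrite w2_0 scale0r addr0 scalerK.
- right; exists (w 0 1 / w 0 2).
  apply: (span_pair_eq e1V); last by rewrite dim_span_e1_alpha dimV.
  rewrite (_ : _ + _ = (w 0 2)^-1 *: (w 0 1 *: e2 + w 0 2 *: e3)); first exact: rpredZ.
  by rewrite scalerDr !scalerA (mulrC (w 0 1)) mulVf ?scale1r.
Qed.

Lemma subalgebra_dim2 (V : {vspace S1}) : is_subalgebra V -> \dim V = 2 ->
  [\/ V = <<[:: e1; e2]>>%VS, V = <<[:: e2; e3]>>%VS |
      exists alpha : C, V = <<[:: e1; (alpha *: e2 + e3)%R]>>%VS].
Proof.
move=> /is_subalgebraP[e1V | VsubN] dimV; last by apply: Or32; apply: dim2_sub_e2e3.
by case: (dim2_e1_spans dimV e1V) => [-> | VE]; [apply: Or31 | apply: Or33].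
Qed.

Lemma aut_equiv_refl V : aut_equiv V V.
Proof.
exists id; split; first by split=> //; exists id.
by move=> w; split=> [wV | [v vV <-]]; first exists w.
Qed.

Section LinearMaps.

Variable f : S1 -> S1.
Hypothesis f_linear : forall (k : C) x y, f (k *: x + y) = k *: f x + f y.

Let f0 : f 0 = 0.
Proof. by have := f_linear 1 0 0; rewrite !scale1r addr0 -{1}[f 0]addr0 => /addrI <-. Qed.

Let fZ k x : f (k *: x) = k *: f x.
Proof. by rewrite -[k *: x]addr0 f_linear f0 addr0. Qed.

Lemma maps_onto_span_pair a b : maps_onto f <<[:: a; b]>> <<[:: f a; f b]>>.
Proof.
move=> w; split=> [/memv_span2P[k1 [k2 ->]] | [v /memv_span2P[k1 [k2 ->]] <-]].
- by exists (k1 *: a + k2 *: b); [apply/memv_span2P; exists k1, k2 | rewrite f_linear fZ].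
- by apply/memv_span2P; exists k1, k2; rewrite f_linear fZ.
Qed.

Lemma is_automorphism_unital : bijective f -> f e1 = e1 ->
  (forall x, f x 0 0 = x 0 0) -> is_automorphism f.
Proof.
move=> f_bij f_e1 f_coord0; split=> // x y.
rewrite !S1mulE !f_coord0 -scaleNr -addrA !f_linear fZ f_e1.
by rewrite scaleNr addrA.
Qed.

End LinearMaps.

Definition shear (alpha : C) (x : S1) : S1 :=
  vec3 (x 0 0) (x 0 2) (x 0 1 - alpha * x 0 2).

Lemma shear_automorphism alpha : is_automorphism (shear alpha).
Proof.
have shear_linear k x y : shear alpha (k *: x + y) = k *: shear alpha x + shear alpha y.
  by rewrite /shear !coordD !coordZ vec3Z vec3D; congr vec3; ring.
apply: (is_automorphism_unital shear_linear).
- exists (fun x : S1 => vec3 (x 0 0) (x 0 2 + alpha * x 0 1) (x 0 1)) => x;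
    by apply/row3P; rewrite /shear !vec3_coord; ring.
- by apply/row3P; rewrite /shear !vec3_coord !coord_e /=; ring.
- by move=> x; rewrite vec3_coord.
Qed.

Lemma aut_equiv_shear alpha :
  aut_equiv <<[:: e1; (alpha *: e2 + e3)%R]>>%VS <<[:: e1; e2]>>%VS.
Proof.
have aut_shear := shear_automorphism alpha; have [shear_linear _ _] := aut_shear.
exists (shear alpha); split=> //.
have shear_e1 : shear alpha e1 = e1.
  by apply/row3P; rewrite /shear !vec3_coord !coord_e /=; ring.
have shear_n : shear alpha (alpha *: e2 + e3) = e2.
  by apply/row3P; rewrite /shear !vec3_coord !coordD !coordZ !coord_e /=; ring.
by have := maps_onto_span_pair shear_linear e1 (alpha *: e2 + e3); rewrite shear_e1 shear_n.
Qed.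

Theorem mainTheorem15 :
  (forall V : {vspace S1},
     (is_subalgebra V /\ \dim V = 2%N) <->
     [\/ V = <<[:: e1; e2]>>%VS,
         V = <<[:: e2; e3]>>%VS |
         exists alpha : C, V = <<[:: e1; (alpha *: e2 + e3)%R]>>%VS])
  /\
  (forall V : {vspace S1},
     is_subalgebra V -> \dim V = 2%N ->
     aut_equiv V <<[:: e1; e2]>>%VS \/ aut_equiv V <<[:: e2; e3]>>%VS).
Proof.
split=> V.
- split=> [[subV dimV] | ]; first exact: subalgebra_dim2.
  case=> [-> | -> | [alpha ->]]; split;
    rewrite ?dim_span_e1e2 ?dim_span_e2e3 ?dim_span_e1_alpha //; apply/is_subalgebraP;
    by [left; rewrite memv_span ?mem_head | right].
- move=> subV dimV; case: (subalgebra_dim2 subV dimV) => [-> | -> | [alpha ->]].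
  + by left; apply: aut_equiv_refl.
  + by right; apply: aut_equiv_refl.
  + by left; apply: aut_equiv_shear.
Qed.
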